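(* Let $\Omega>0$ denote the maximum absolute value of the stored quantities, let $C$ be the column index of the array of executed (visited) indicators in $X\in\mathbb{R}^{K\times d}$, and let $E$ be a target column index. Then there exists a single transformer layer that simulates the termination operation $X[1,E]\leftarrow(\text{no entry of }X[2{:},C]\text{ equals }0)$, i.e. it writes $1$ into $X[1,E]$ if none of the entries $X[2,C],\dots,X[K,C]$ is zero and $0$ otherwise.
   Context: Conventions: rows/columns indexed from $1$; $X[i,j]$ is the $(i,j)$ entry; $X[2{:},j]$ denotes the entries of column $j$ in rows $2,\dots,K$. $\phi(x)=\max\{x,0\}$ entrywise. Hardmax $\sigma$: row $i$ of $\sigma(\Phi)$ is $\frac{1}{|S_i|}\sum_{k\in S_i}e_k$, $S_i=\{k:\Phi_{ik}=\max_j\Phi_{ij}\}$. Positional encoding: $p_0=(0,1)^\top$, $p_i=R_{\widehat\delta}^\top p_{i-1}$ with $R_{\widehat\delta}=\begin{bmatrix}\cos\widehat\delta&-\sin\widehat\delta\\ \sin\widehat\delta&\cos\widehat\delta\end{bmatrix}$, $\widehat\delta$ the nearest representable approximation of the minimum increment angle. For a weighted hypergraph with incident matrix $A\in\mathbb{R}^{n_v\times n_e}$ ($A_{ij}=w(e_j)$ if vertex $v_i\in e_j$, else $0$) and $K\ge\max\{n_v,n_e\}+1$, the padded incident matrix $\widetilde A\in\mathbb{R}^{K\times K}$ has $\widetilde A_{i+1,j+1}=A_{ij}$, zeros elsewhere. A transformer layer on $X\in\mathbb{R}^{K\times d}$ is $f(X,\widetilde A)=f_{\mathrm{mlp}}(f_{\mathrm{attn}}(X,\widetilde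 A))$, $f_{\mathrm{attn}}(X,\widetilde A)=\sum_{i\in M_A}\psi^{(i)}(X,\widetilde A)+\sum_{i\in M_{A^\top}}\psi^{(i)}(X,\widetilde A^\top)+\sum_{i\in M}\psi^{(i)}(X,I_K)+X$, $\psi(X,B)=B\,\sigma(XW_QW_K^\top X^\top)XW_V$ ($W_Q,W_K\in\mathbb{R}^{d\times2}$, $W_V\in\mathbb{R}^{d\times d}$), $f_{\mathrm{mlp}}(X)=Z^{(4)}W^{(4)}+X$, $Z^{(1)}=X$, $Z^{(j+1)}=\phi(Z^{(j)}W^{(j)})$ ($j=1,2,3$). Storage convention: scalars in the top row of a column (rest $0$), arrays of length $K-1$ in rows $2,\dots,K$ (top $0$); designated columns $B_{\mathrm{global}}$ (top $1$, rest $0$), $B_{\mathrm{local}}$ (top $0$, rest $1$), positional columns $P_1,P_2$ (array position $i$ holds $p_i^{(1)},p_i^{(2)}$), and scratchpad columns. ''Simulating an operation'' means the layer's weights can be chosen so that applying it to $X$ performs the stated update. *)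

From HB Require Import structures.
From mathcomp Require Import all_boot all_order all_algebra.
Set Implicit Arguments. Unset Strict Implicit. Unset Printing Implicit Defensive.
Import Order.TTheory GRing.Theory Num.Theory.
Local Open Scope ring_scope.

Section Transformer.
Variable R : realFieldType.

Definition relu_mx m n (A : 'M[R]_(m, n)) : 'M[R]_(m, n) :=
  map_mx (fun x => Num.max x 0) A.

Definition argmax_set n (Phi : 'M[R]_n) (i : 'I_n) : {set 'I_n} :=
  [set k | [forall j, Phi i j <= Phi i k]].

Definition hardmax n (Phi : 'M[R]_n) : 'M[R]_n :=
  \matrix_(i, k) (if k \in argmax_set Phi i then (#|argmax_set Phi i|%:R)^-1 else 0).

Record head (d : nat) := Head {
  WQ : 'M[R]_(d, 2); WK : 'M[R]_(d, 2); WV : 'M[R]_(d, d) }.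

Definition psi n d (h : head d) (X : 'M[R]_(n, d)) (B : 'M[R]_n) : 'M[R]_(n, d) :=
  B *m hardmax (X *m WQ h *m (WK h)^T *m X^T) *m X *m WV h.

Record mlp (d : nat) := Mlp {
  d1 : nat; d2 : nat; d3 : nat;
  W1 : 'M[R]_(d, d1); W2 : 'M[R]_(d1, d2); W3 : 'M[R]_(d2, d3); W4 : 'M[R]_(d3, d) }.

Definition f_mlp n d (m : mlp d) (X : 'M[R]_(n, d)) : 'M[R]_(n, d) :=
  relu_mx (relu_mx (relu_mx (X *m W1 m) *m W2 m) *m W3 m) *m W4 m + X.

Record layer (d : nat) := Layer {
  headsA : seq (head d); headsAT : seq (head d); headsI : seq (head d);
  lmlp : mlp d }.

Definition f_attn n d (L : layer d) (X : 'M[R]_(n, d)) (A : 'M[R]_n) : 'M[R]_(n, d) :=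
  \sum_(h <- headsA L) psi h X A + \sum_(h <- headsAT L) psi h X A^T
  + \sum_(h <- headsI L) psi h X 1%:M + X.

Definition f_layer n d (L : layer d) (X : 'M[R]_(n, d)) (A : 'M[R]_n) : 'M[R]_(n, d) :=
  f_mlp (lmlp L) (f_attn L X A).

End Transformer.

(* Matrices have K.+1 rows; row ord0 is the paper's row 1 (the "top" row),
   rows i <> ord0 are the paper's rows 2..K. *)

Definition padded (R : realFieldType) K (A : 'M[R]_K.+1) : Prop :=
  (forall j, A ord0 j = 0) /\ (forall i, A i ord0 = 0).

Definition termination_update (R : realFieldType) K d (C E : 'I_d)
  (X : 'M[R]_(K.+1, d)) : 'M[R]_(K.+1, d) :=
  \matrix_(i, j)
    (if (i == ord0) && (j == E) then
       (if [forall k : 'I_K.+1, (k != ord0) ==> (X k C != 0)] then 1 else 0)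
     else X i j).

From Pilot Require Import Defs.
From HB Require Import structures.
From mathcomp Require Import all_boot all_order all_algebra.
From mathcomp Require Import lra.
Import Order.TTheory GRing.Theory Num.Theory.
Local Open Scope ring_scope.

(* Two identity-attention heads writing only into column E, followed by a
   trivial MLP, suffice.  Both heads query with (g_i, l_i), the B_global and
   B_local entries of row i.  The reset head scores g_i g_k + l_i l_k, so the
   top row attends to itself alone and adds 1 - X[1,E], while the other rows
   attend to rows 2..K, where its value g_k - X[k,E] vanishes.  The zero-test
   head gives the top row the scores l_k - X[k,C], equal to 1 exactly at the
   rows 2..K with X[k,C] = 0 and to 0 elsewhere; its value is minus that score,
   so the hardmax average is -1 if some such row exists and 0 otherwise.  The
   other rows score g_k and attend to the top row, where the value is 0.
   Hardmax is exact, so neither the bound Omega on the entries nor the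
   distinctness of the columns is needed. *)

Section Hardmax.
Context {R : realFieldType}.

Lemma argmax_setP n (Phi : 'M[R]_n) i k :
  reflect (forall j, Phi i j <= Phi i k) (k \in argmax_set Phi i).
Proof. by rewrite inE; apply: forallP. Qed.

Lemma argmax_set_neq0 n (Phi : 'M[R]_n) i : argmax_set Phi i != set0.
Proof.
apply/set0Pn; exists [arg max_(k > i) Phi i k]%O; apply/argmax_setP => j.
by case: arg_maxP => // k _; apply.
Qed.

Lemma hardmax_mulmx_const n m (Phi : 'M[R]_n) (V : 'M[R]_(n, m)) i j c :
  (forall k, k \in argmax_set Phi i -> V k j = c) -> (hardmax Phi *m V) i j = c.
Proof.
move=> Vc; set S := argmax_set Phi i.
rewrite mxE (eq_bigr (fun k => if k \in S then #|S|%:R^-1 * c else 0)); last first.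
  by move=> k _; rewrite mxE; case: ifP => kS; [rewrite Vc | rewrite mul0r].
rewrite -big_mkcond sumr_const -mulrnAl -[_^-1 *+ _]mulr_natr mulVf ?mul1r //.
by rewrite pnatr_eq0 -lt0n card_gt0 argmax_set_neq0.
Qed.
End Hardmax.

Section Heads.
Context {R : realFieldType} {d : nat}.

Local Notation e a := (delta_mx a 0 : 'cV[R]_d).

Lemma mulmx_delta_cV n (X : 'M[R]_(n, d)) a i : (X *m e a) i 0 = X i a.
Proof. by rewrite -colE mxE. Qed.

Lemma mulmx_cV_delta n m (u : 'cV[R]_n) (E : 'I_m) i j :
  (u *m delta_mx 0 E) i j = (j == E)%:R * u i 0.
Proof. by rewrite mxE big_ord1 mxE eqxx /= eq_sym mulrC. Qed.

Lemma mulmx_delta_cVB n (X : 'M[R]_(n, d)) a b i : (X *m (e a - e b)) i 0 = X i a - X i b.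
Proof. by rewrite mulmxBr -!colE !mxE. Qed.

Lemma rank2_scoreE n (X : 'M[R]_(n, d)) (q1 q2 k1 k2 : 'cV[R]_d) i k :
  (X *m row_mx q1 q2 *m (row_mx k1 k2)^T *m X^T) i k =
  (X *m q1) i 0 * (X *m k1) k 0 + (X *m q2) i 0 * (X *m k2) k 0.
Proof.
rewrite -mulmxA -trmx_mul !mul_mx_row tr_row_mx mul_row_col.
by rewrite !mxE !big_ord1 !mxE.
Qed.

Definition write_head (q1 q2 k1 k2 w : 'cV[R]_d) (E : 'I_d) : Defs.head R d :=
  Head (row_mx q1 q2) (row_mx k1 k2) (w *m delta_mx 0 E).

Definition head_score {n} (h : Defs.head R d) (X : 'M[R]_(n, d)) : 'M[R]_n :=
  X *m WQ h *m (WK h)^T *m X^T.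

(* [row_mx q1 q2 : 'M_(d, 1 + 1)] is only convertible to ['M_(d, 2)], so the
   block-product lemmas cannot rewrite [head_score] directly. *)
Lemma head_score_write_head n (X : 'M[R]_(n, d)) q1 q2 k1 k2 w E i k :
  head_score (write_head q1 q2 k1 k2 w E) X i k =
  (X *m q1) i 0 * (X *m k1) k 0 + (X *m q2) i 0 * (X *m k2) k 0.
Proof. exact: rank2_scoreE. Qed.

Lemma psi_write_head n (X : 'M[R]_(n, d)) q1 q2 k1 k2 w E i j :
  let h := write_head q1 q2 k1 k2 w E in
  psi h X 1%:M i j = (j == E)%:R * (hardmax (head_score h X) *m (X *m w)) i 0.
Proof. by rewrite /psi /head_score /write_head /= mul1mx !mulmxA mulmx_cV_delta. Qed.

Definition id_mlp : mlp R d := @Mlp R d 0 0 0 0 0 0 0.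

Lemma f_mlp_id n (X : 'M[R]_(n, d)) : f_mlp id_mlp X = X.
Proof. by rewrite /f_mlp /= mulmx0 add0r. Qed.

Definition self_layer (hs : seq (Defs.head R d)) : layer R d := Layer [::] [::] hs id_mlp.

Lemma f_self_layerE n hs (X : 'M[R]_(n, d)) A :
  f_layer (self_layer hs) X A = \sum_(h <- hs) psi h X 1%:M + X.
Proof. by rewrite /f_layer f_mlp_id /f_attn /= !big_nil !add0r. Qed.

End Heads.

Section Termination.
Context (R : realFieldType) {d : nat} (Bg Bl C E : 'I_d).

Local Notation e a := (delta_mx a 0 : 'cV[R]_d).

Definition reset_head := write_head (e Bg) (e Bl) (e Bg) (e Bl) (e Bg - e E) E.

Definition zero_test_head := write_head (e Bg) (e Bl) (e Bl - e C) (e Bg) (e C - e Bl) E.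

Definition termination_layer := self_layer [:: zero_test_head; reset_head].

Variables (K : nat) (X : 'M[R]_(K.+1, d)).
Hypotheses (Xg : forall i, X i Bg = (i == ord0)%:R) (Xl : forall i, X i Bl = (i != ord0)%:R).
Hypotheses (XC0 : X ord0 C = 0) (XC : forall i, i != ord0 -> X i C = 0 \/ X i C = 1).
Hypothesis XE : forall i, i != ord0 -> X i E = 0.

Lemma reset_scoreE i k : head_score reset_head X i k = ((i == ord0) == (k == ord0))%:R.
Proof.
rewrite head_score_write_head !mulmx_delta_cV !Xg !Xl.
by case: (i == ord0); case: (k == ord0); rewrite /= ?mulr0 ?mulr1 ?addr0 ?add0r.
Qed.

Lemma zero_test_scoreE i k : head_score zero_test_head X i k =
  if i == ord0 then (k != ord0)%:R - X k C else (k == ord0)%:R.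
Proof.
rewrite head_score_write_head mulmx_delta_cVB !mulmx_delta_cV !Xg !Xl.
by case: (i == ord0); rewrite /= ?mul1r ?mul0r ?addr0 ?add0r.
Qed.

Lemma psi_reset_head i j :
  psi reset_head X 1%:M i j = ((i == ord0) && (j == E))%:R * (1 - X ord0 E).
Proof.
rewrite psi_write_head; case: (j == E); last by rewrite andbF !mul0r.
rewrite andbT mul1r; apply: hardmax_mulmx_const => k /argmax_setP/(_ i).
rewrite !reset_scoreE eqxx mulmx_delta_cVB Xg.
case: (boolP (k == ord0)) => [/eqP->|k0].
  by case: (i == ord0); rewrite /= ?mul1r // ler10.
by rewrite XE //; case: (i == ord0); rewrite /= ?subr0 ?mul0r // ler10.
Qed.

Lemma psi_zero_test_head i j :
  psi zero_test_head X 1%:M i j =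
  - ((i == ord0) && (j == E) && ~~ [forall k, (k != ord0) ==> (X k C != 0)])%:R.
Proof.
rewrite psi_write_head; case: (j == E); last by rewrite andbF mul0r oppr0.
rewrite andbT mul1r; case: (boolP (i == ord0)) => [/eqP-> | i0] /=; last first.
  apply: hardmax_mulmx_const => k /argmax_setP/(_ ord0).
  rewrite !zero_test_scoreE (negbTE i0) eqxx mulmx_delta_cVB Xl.
  case: (boolP (k == ord0)) => [/eqP->|_]; first by rewrite XC0 subrr oppr0.
  by rewrite ler10.
have XC1 k : k != ord0 -> X k C != 0 -> X k C = 1 by move=> /XC[->|->]; rewrite ?eqxx.
case: (boolP [forall k, _]) => [/forallP visited | /forallPn [k1]] /=.
  apply: hardmax_mulmx_const => k _; rewrite mulmx_delta_cVB Xl oppr0.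
  case: (boolP (k == ord0)) => [/eqP->|k0]; first by rewrite XC0 subrr.
  by rewrite /= XC1 ?subrr //; apply: (implyP (visited k)).
rewrite negb_imply negbK => /andP[k10 /eqP Ck1].
apply: hardmax_mulmx_const => k /argmax_setP/(_ k1).
rewrite !zero_test_scoreE eqxx mulmx_delta_cVB Xl k10 Ck1.
case: (boolP (k == ord0)) => [/eqP->|k0] /=; first by rewrite XC0; lra.
by case: (XC k k0) => ->; lra.
Qed.

Lemma f_termination_layer A : f_layer termination_layer X A = termination_update C E X.
Proof.
apply/matrixP => i j; rewrite f_self_layerE mxE summxE big_cons big_seq1.
rewrite psi_zero_test_head psi_reset_head mxE.
case: (boolP ((i == ord0) && (j == E))) => [/andP[/eqP-> /eqP->] | _] /=.
  by case: [forall k, _] => /=; lra.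
by rewrite mulr0n mul0r oppr0 !add0r.
Qed.

End Termination.

Theorem lemmaC6 (R : realFieldType) (d : nat) (Omega : R)
  (Bglobal Blocal C E : 'I_d) :
  0 < Omega ->
  uniq [:: Bglobal; Blocal; C; E] ->
  exists L : layer R d,
    forall (K : nat) (X : 'M[R]_(K.+1, d)) (A : 'M[R]_K.+1),
      padded A ->
      (forall i j, `|X i j| <= Omega) ->
      (forall i, X i Bglobal = (i == ord0)%:R) ->
      (forall i, X i Blocal = (i != ord0)%:R) ->
      X ord0 C = 0 ->
      (forall i, i != ord0 -> X i C = 0 \/ X i C = 1) ->
      (forall i, i != ord0 -> X i E = 0) ->
      f_layer L X A = termination_update C E X.
Proof.
move=> _ _; exists (termination_layer R Bglobal Blocal C E).
move=> K X A _ _ Xg Xl XC0 XC XE.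
exact: f_termination_layer.
Qed.
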